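(* Let $\mathcal H_A,\mathcal H_B$ be finite-dimensional Hilbert spaces, $U$ a unitary on $\mathcal H_A\otimes\mathcal H_B$, $\beta$ a density operator on $\mathcal H_B$, and let $\mathcal E[X]=\operatorname{Tr}_B[U(X\otimes\beta)U^\dagger]$. Let $\alpha$ be a density operator on $\mathcal H_A$ such that $\mathcal E[\alpha]$ is invertible. Then the Petz recovery map of $\mathcal E$ with reference $\alpha$, $$\hat{\mathcal E}_\alpha[X]=\sqrt{\alpha}\,\mathcal E^\dagger\!\left[\mathcal E[\alpha]^{-1/2}X\,\mathcal E[\alpha]^{-1/2}\right]\sqrt\alpha,$$ satisfies $$\hat{\mathcal E}_\alpha[X]=\operatorname{Tr}_B\!\left[U^\dagger\,\mathcal A_{\Omega}[X]\,U\right],\qquad \Omega:=U(\alpha\otimes\beta)U^\dagger,$$ where for a state $\Omega$ on $\mathcal H_A\otimes\mathcal H_B$ with $\operatorname{Tr}_B\Omega$ invertible, $$\mathcal A_{\Omega}[X]=\sqrt{\Omega}\left[\left((\operatorname{Tr}_B\Omega)^{-1/2}\,X\,(\operatorname{Tr}_B\Omega)^{-1/2}\right)\otimes\mathbb 1_B\right]\sqrt{\Omega}.$$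
   Context: $\mathcal E^\dagger$ denotes the adjoint map with respect to the Hilbert–Schmidt inner product, defined by $\operatorname{Tr}(\mathcal E[X]Y)=\operatorname{Tr}(X\mathcal E^\dagger[Y])$ for all operators $X,Y$. $\operatorname{Tr}_B$ is the partial trace over $\mathcal H_B$. *)

(* Complex scalars: an arbitrary numClosedFieldType C
   (e.g. algC or complex R); operators on H_A, H_B, H_A (x) H_B are square
   matrices of sizes m, n, m*n; the tensor product is mxtens.tensmx. *)
From HB Require Import structures.
From mathcomp Require Import all_boot all_order all_algebra.
From mathcomp Require Import sesquilinear spectral.
From mathcomp Require mxtens.
Set Implicit Arguments. Unset Strict Implicit. Unset Printing Implicit Defensive.
Import Order.TTheory GRing.Theory Num.Theory Num.Def.
Local Open Scope ring_scope.

Section QDefs.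
Variable C : numClosedFieldType.

Definition dagger m n (A : 'M[C]_(m, n)) : 'M[C]_(n, m) := (map_mx conjC A)^T.

(* Tensor product of operators (Kronecker product, A-index major). *)
Definition otimes m n (A : 'M[C]_m) (B : 'M[C]_n) : 'M[C]_(m * n) :=
  mxtens.tensmx A B.

Definition unitary n (U : 'M[C]_n) : Prop := U *m dagger U = 1%:M.

Definition psd n (A : 'M[C]_n) : Prop :=
  dagger A = A /\ forall v : 'rV[C]_n, 0 <= (v *m A *m dagger v) 0 0.

Definition density n (A : 'M[C]_n) : Prop := psd A /\ \tr A = 1.

(* Principal (positive) square root, via the spectral decomposition
   A = P^-1 diag(d) P with P unitary; for psd A this is the unique psd
   square root. *)
Definition msqrt n (A : 'M[C]_n) : 'M[C]_n :=
  invmx (spectralmx A) *m diag_mx (map_mx sqrtC (spectral_diag A))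
    *m spectralmx A.

Definition minvsqrt n (A : 'M[C]_n) : 'M[C]_n := invmx (msqrt A).

Definition ptraceB m n (M : 'M[C]_(m * n)) : 'M[C]_m :=
  \matrix_(i, j) \sum_(k < n)
     M (mxtens.mxtens_index (i, k)) (mxtens.mxtens_index (j, k)).

(* Adjoint w.r.t. the trace pairing Tr(E[X] Y) = Tr(X E^dagger[Y]):
   the unique such map, written out entrywise
   (E^dagger[Y])_{ij} = Tr(E[e_{ji}] Y). *)
Definition hs_adjoint m n (E : 'M[C]_m -> 'M[C]_n) (Y : 'M[C]_n) : 'M[C]_m :=
  \matrix_(i, j) \tr (E (delta_mx j i) *m Y).

Definition chanE m n (U : 'M[C]_(m * n)) (beta : 'M[C]_n) (X : 'M[C]_m)
  : 'M[C]_m := ptraceB (U *m otimes X beta *m dagger U).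

Definition petz m (E : 'M[C]_m -> 'M[C]_m) (alpha X : 'M[C]_m) : 'M[C]_m :=
  msqrt alpha *m
    hs_adjoint E (minvsqrt (E alpha) *m X *m minvsqrt (E alpha))
  *m msqrt alpha.

Definition mapA m n (Om : 'M[C]_(m * n)) (X : 'M[C]_m) : 'M[C]_(m * n) :=
  msqrt Om *m
    otimes (minvsqrt (ptraceB Om) *m X *m minvsqrt (ptraceB Om)) (1%:M : 'M[C]_n)
  *m msqrt Om.

End QDefs.

(* The principal square root commutes with unitary conjugation and with tensor
   products of positive operators, so sqrt Omega = U (sqrt alpha (x) sqrt beta) U^dagger.
   In the Heisenberg picture E^dagger[Y] = Tr_B[(1 (x) beta) U^dagger (Y (x) 1) U], and
   Tr_B Omega = E[alpha], so both sides involve the same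
   W = E[alpha]^-1/2 X E[alpha]^-1/2.  Conjugating A_Omega[X] by U leaves
   (sqrt alpha (x) sqrt beta) U^dagger (W (x) 1) U (sqrt alpha (x) sqrt beta); the partial
   trace pulls the factors sqrt alpha out, and Tr_B is cyclic for operators of the
   form 1 (x) B, which merges the two factors sqrt beta into beta. *)

From HB Require Import structures.
From mathcomp Require Import all_boot all_order all_algebra.
From mathcomp Require Import sesquilinear spectral mxtens.
Set Implicit Arguments. Unset Strict Implicit. Unset Printing Implicit Defensive.
Import GRing.Theory Num.Theory.
Local Open Scope ring_scope.
Local Open Scope sesquilinear_scope.

Lemma big_mxtens_index (R : nmodType) m n (F : 'I_(m * n) -> R) :
  \sum_(k < m * n) F k = \sum_(i < m) \sum_(j < n) F (@mxtens_index m n (i, j)).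
Proof.
rewrite pair_big (reindex (@mxtens_index m n)) /=; last first.
  by exists (@mxtens_unindex m n) => k _; rewrite (mxtens_indexK, mxtens_unindexK).
by apply: eq_bigr => -[i j].
Qed.

Lemma mxtrace_mul_delta (R : pzSemiRingType) n (A : 'M[R]_n) i j :
  \tr (A *m delta_mx i j) = A j i.
Proof.
rewrite /mxtrace (bigD1 j) //= big1 => [|k /negPf nkj]; rewrite mxE.
  rewrite (bigD1 i) //= big1 => [|l /negPf nli]; first by rewrite mxE !eqxx mulr1 !addr0.
  by rewrite mxE nli mulr0.
by apply: big1 => l _; rewrite mxE nkj andbF mulr0.
Qed.

Lemma mxtrace_mulmx_inj (R : pzSemiRingType) n (A B : 'M[R]_n) :
  (forall W, \tr (A *m W) = \tr (B *m W)) -> A = B.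
Proof. by move=> AB; apply/matrixP => i j; rewrite -!mxtrace_mul_delta. Qed.

Lemma tensmx11 (R : pzRingType) m n : (1%:M : 'M[R]_m) *t (1%:M : 'M[R]_n) = 1%:M.
Proof.
apply/matrixP => i j.
case: (mxtens_indexP i) => a b; case: (mxtens_indexP j) => c d.
rewrite tensmxE !mxE (can_eq (@mxtens_indexK m n)) xpair_eqE.
by case: (a == c); case: (b == d); rewrite ?mulr1 ?mulr0 ?mul0r.
Qed.

Lemma diag_mx_tens (R : pzRingType) m n (d : 'rV[R]_m) (e : 'rV[R]_n) :
  diag_mx d *t diag_mx e
  = diag_mx (\row_k (d 0 (mxtens_unindex k).1 * e 0 (mxtens_unindex k).2)).
Proof.
apply/matrixP => i j.
case: (mxtens_indexP i) => a b; case: (mxtens_indexP j) => c f.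
rewrite tensmxE !mxE (can_eq (@mxtens_indexK m n)) xpair_eqE mxtens_indexK /=.
by case: (eqVneq a c) => [->|_]; case: (eqVneq b f) => [->|_];
  rewrite ?mulr1n ?mulr0n ?mulr0 ?mul0r.
Qed.

Lemma intertwine_diag_mx_map (R : idomainType) p q (M : 'M[R]_(p, q))
    (d : 'rV[R]_q) (e : 'rV[R]_p) (f : R -> R) :
  M *m diag_mx d = diag_mx e *m M ->
  M *m diag_mx (map_mx f d) = diag_mx (map_mx f e) *m M.
Proof.
move=> /matrixP Mde; apply/matrixP => i j; move: (Mde i j).
rewrite !mul_mx_diag !mul_diag_mx !mxE.
have [->|nzM] := eqVneq (M i j) 0; first by rewrite !mul0r !mulr0.
by rewrite [e 0 i * _]mulrC => /(mulfI nzM) ->; rewrite mulrC.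
Qed.

Section QuantumOperators.
Variable C : numClosedFieldType.

Lemma daggerE m n (A : 'M[C]_(m, n)) : dagger A = A ^t*.
Proof. by rewrite /dagger map_trmx. Qed.

Lemma daggerK m n (A : 'M[C]_(m, n)) : dagger (dagger A) = A.
Proof. by rewrite !daggerE trmxCK. Qed.

Lemma dagger_mul m n p (A : 'M[C]_(m, n)) (B : 'M[C]_(n, p)) :
  dagger (A *m B) = dagger B *m dagger A.
Proof. by rewrite /dagger map_mxM trmx_mul. Qed.

Lemma dagger_tens m n (A : 'M[C]_m) (B : 'M[C]_n) :
  dagger (A *t B) = dagger A *t dagger B.
Proof. by rewrite !daggerE trmx_tens map_mxT. Qed.

Lemma self_adjoint_normalmx n (A : 'M[C]_n) : dagger A = A -> A \is normalmx.
Proof. by rewrite daggerE => hA; apply/normalmxP; rewrite hA. Qed.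

Lemma mxtrace_ptraceB m n (N : 'M[C]_(m * n)) (W : 'M[C]_m) :
  \tr (ptraceB N *m W) = \tr (N *m (W *t 1%:M)).
Proof.
rewrite /mxtrace big_mxtens_index; apply: eq_bigr => i _.
rewrite mxE; under eq_bigr do rewrite mxE mulr_suml.
rewrite exchange_big; apply: eq_bigr => k _; rewrite mxE big_mxtens_index.
apply: eq_bigr => j _; rewrite (bigD1 k) //= big1 => [|l /negPf nlk].
  by rewrite tensmxE mxE eqxx mulr1 addr0.
by rewrite tensmxE mxE nlk mulr0n !mulr0.
Qed.

Lemma ptraceB_tens_conj m n (A A' : 'M[C]_m) (B B' : 'M[C]_n) (N : 'M[C]_(m * n)) :
  ptraceB ((A *t B) *m N *m (A' *t B'))
  = A *m ptraceB ((1%:M *t (B' *m B)) *m N) *m A'.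
Proof.
apply: mxtrace_mulmx_inj => W.
rewrite mxtrace_ptraceB -!mulmxA mxtrace_mulC -!mulmxA !tensmx_mul.
rewrite [RHS]mxtrace_mulC -mulmxA mxtrace_ptraceB -mulmxA [RHS]mxtrace_mulC.
by rewrite -mulmxA tensmx_mul mulmx1 !mul1mx !mulmxA.
Qed.

Lemma hs_adjoint_eq m n (E : 'M[C]_m -> 'M[C]_n) (Y : 'M[C]_n) (F : 'M[C]_m) :
  (forall X, \tr (E X *m Y) = \tr (X *m F)) -> hs_adjoint E Y = F.
Proof. by move=> EF; apply/matrixP => i j; rewrite mxE EF mxtrace_mulC mxtrace_mul_delta. Qed.

Lemma hs_adjoint_chanE m n (U : 'M[C]_(m * n)) (beta : 'M[C]_n) (Y : 'M[C]_m) :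
  hs_adjoint (chanE U beta) Y
  = ptraceB ((1%:M *t beta) *m (dagger U *m (Y *t 1%:M) *m U)).
Proof.
apply: hs_adjoint_eq => X; rewrite /chanE /otimes mxtrace_ptraceB.
rewrite [RHS]mxtrace_mulC mxtrace_ptraceB [RHS]mxtrace_mulC mulmxA tensmx_mul.
rewrite mulmx1 mul1mx !mulmxA -2![in LHS](mulmxA U); exact: mxtrace_mulC.
Qed.

Lemma msqrt_similar_diag n (A P P' : 'M[C]_n) (d : 'rV[C]_n) :
  A \is normalmx -> P *m P' = 1%:M -> A = P' *m diag_mx d *m P ->
  msqrt A = P' *m diag_mx (map_mx sqrtC d) *m P.
Proof.
move=> /orthomx_spectralP spA PP' Ad; rewrite /msqrt.
set S := spectralmx A in spA *; have S_unit : S \in unitmx := spectral_unit A.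
(* [P *m invmx S] intertwines the two diagonal forms of [A], hence their square roots. *)
have: (P *m invmx S) *m diag_mx (spectral_diag A) = diag_mx d *m (P *m invmx S).
  have := congr1 (fun X => P *m X *m invmx S) (etrans (esym spA) Ad).
  by rewrite /= !mulmxA PP' mul1mx mulmxK // -!mulmxA.
move=> /(intertwine_diag_mx_map sqrtC) PSsqrt.
rewrite -[LHS]mul1mx -(mulmx1C PP') -!mulmxA (mulmxA P) (mulmxA (P *m _)) PSsqrt.
by rewrite !mulmxA mulmxKV.
Qed.

Lemma msqrt_sqr n (A : 'M[C]_n) : A \is normalmx -> msqrt A *m msqrt A = A.
Proof.
move=> /orthomx_spectralP spA; have S_unit := spectral_unit A.
rewrite [RHS]spA /msqrt !mulmxA mulmxK // -[in LHS](mulmxA (invmx _)) mulmx_diag.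
by congr (_ *m diag_mx _ *m _); apply/rowP => j; rewrite !mxE -expr2 sqrtCK.
Qed.

Lemma psd_spectral_diag_ge0 n (A : 'M[C]_n) i : psd A -> 0 <= spectral_diag A 0 i.
Proof.
case=> hA /(_ (delta_mx 0 i *m spectralmx A)).
have /orthomx_spectralP {2}-> := self_adjoint_normalmx hA.
rewrite dagger_mul !daggerE -invmx_unitary ?spectral_unitarymx // !mulmxA.
by rewrite !mulmxK ?spectral_unit // trmx_delta map_delta_mx -rowE -colE !mxE eqxx.
Qed.

Lemma msqrt_unitary_conj n (U A : 'M[C]_n) : unitary U -> A \is normalmx ->
  msqrt (U *m A *m dagger U) = U *m msqrt A *m dagger U.
Proof.
move=> UU' nA; have U'U : dagger U *m U = 1%:M := mulmx1C UU'.
have /orthomx_spectralP spA := nA; set S := spectralmx A in spA *.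
rewrite (msqrt_similar_diag (P := S *m dagger U) (P' := U *m invmx S)
                            (d := spectral_diag A)).
- by rewrite /msqrt !mulmxA.
- rewrite daggerE; apply/normalmxP; rewrite -!daggerE !dagger_mul daggerK !mulmxA.
  rewrite -!(mulmxA (_ *m _) (dagger U) U) U'U !mulmx1 -!(mulmxA U).
  by move/normalmxP: nA; rewrite -daggerE => ->.
- by rewrite mulmxA -(mulmxA S) U'U mulmx1 mulmxV ?spectral_unit.
- by rewrite {1}spA !mulmxA.
Qed.

Lemma msqrt_tens m n (A : 'M[C]_m) (B : 'M[C]_n) :
  psd A -> psd B -> msqrt (A *t B) = msqrt A *t msqrt B.
Proof.
move=> pA pB; have [hA _] := pA; have [hB _] := pB.
have /orthomx_spectralP spA := self_adjoint_normalmx hA.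
have /orthomx_spectralP spB := self_adjoint_normalmx hB.
pose dAB := \row_k (spectral_diag A 0 (mxtens_unindex k).1
                    * spectral_diag B 0 (mxtens_unindex k).2).
rewrite (msqrt_similar_diag (P := spectralmx A *t spectralmx B)
           (P' := invmx (spectralmx A) *t invmx (spectralmx B)) (d := dAB)).
- have -> : map_mx sqrtC dAB
      = \row_k (map_mx sqrtC (spectral_diag A) 0 (mxtens_unindex k).1
                * map_mx sqrtC (spectral_diag B) 0 (mxtens_unindex k).2).
    by apply/rowP => k; rewrite !mxE sqrtCM ?nnegrE ?psd_spectral_diag_ge0.
  by rewrite -diag_mx_tens !tensmx_mul.
- by apply: self_adjoint_normalmx; rewrite dagger_tens hA hB.
- by rewrite tensmx_mul !mulmxV ?spectral_unit // tensmx11.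
- by rewrite -diag_mx_tens !tensmx_mul -spA -spB.
Qed.

End QuantumOperators.

Theorem mainTheorem2 (C : numClosedFieldType) (m n : nat)
  (U : 'M[C]_(m * n)) (beta : 'M[C]_n) (alpha : 'M[C]_m) :
  unitary U -> density beta -> density alpha ->
  chanE U beta alpha \in unitmx ->
  forall X : 'M[C]_m,
    petz (chanE U beta) alpha X =
    ptraceB (dagger U *m mapA (U *m otimes alpha beta *m dagger U) X *m U).
Proof.
move=> UU' [pB _] [pA _] _ X.
have U'U : dagger U *m U = 1%:M := mulmx1C UU'.
have nAB : alpha *t beta \is normalmx.
  by apply: self_adjoint_normalmx; rewrite dagger_tens pA.1 pB.1.
rewrite /petz /mapA /otimes hs_adjoint_chanE msqrt_unitary_conj // msqrt_tens //.
set W := minvsqrt _ *m X *m minvsqrt _.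
set T := msqrt alpha *t msqrt beta.
have -> : dagger U *m (U *m T *m dagger U *m (W *t 1%:M) *m (U *m T *m dagger U)) *m U
          = T *m (dagger U *m (W *t 1%:M) *m U) *m T.
  by rewrite !mulmxA U'U mul1mx -(mulmxA _ (dagger U) U) U'U mulmx1.
rewrite ptraceB_tens_conj msqrt_sqr //; exact: self_adjoint_normalmx pB.1.
Qed.
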